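(* Let $G$ be a graph, $R \subseteq V(G)$, $v_0\in V(G)$, and let $P$ be a shortest path from $v_0$ to $R$. Then for every milestone $v\in M_R(P)$, every vertex $u$ in the neutral prefix of $v$ in $P$, and every $y\in R$, it holds that $\mathrm{dist}(u,y)=|P[u,v]|+\mathrm{dist}(v,y)$.
   Context: $G$ is an unweighted undirected graph and $\mathrm{dist}$ is its shortest-path distance; $|Q|$ denotes the number of edges of a path $Q$ and $P[a,b]$ the subpath of $P$ between vertices $a,b$ of $P$. A shortest path from $v_0$ to $R$ is a path of length $\mathrm{dist}(v_0,R)=\min_{y\in R}\mathrm{dist}(v_0,y)$ from $v_0$ to a vertex of $R$; let $x$ be its unique vertex in $R$. Order $V(P)$ by $\le_P$: $v\le_P u$ iff $u\in V(P[v,x])$ (so the order goes from $v_0$ towards $x$). For $z\in V(G)$, the distance profile $\operatorname{prof}_{R,x}[z]\colon R\to\mathbb{Z}$ is $\operatorname{prof}_{R,x}[z](s)=\mathrm{dist}(z,s)-\mathrm{dist}(z,x)$. A vertex $v\in V(P)$ is a milestone of $P$ if $v=x$ or $\operatorname{prof}_{R,x}[v]\ne\operatorname{prof}_{R,x}[u]$ where $u$ is the successor of $v$ in $\le_P$; $M_R(P)$ is the set of milestones. For $v\in M_R(P)$, the neutral prefix of $v$ in $P$ is the vertex set of the maximal subpath $Q$ of $P[v_0,v]$ such that $v$ is the only milestone of $P$ belonging to $Q$. *)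

From mathcomp Require Import all_boot all_order all_algebra.
Set Implicit Arguments. Unset Strict Implicit. Unset Printing Implicit Defensive.
Import Order.TTheory GRing.Theory Num.Theory.

Section Graph.
Variables (T : finType) (e : rel T).

Definition walkb (n : nat) (a b : T) : bool :=
  [exists p : n.-tuple T, path e a p && (last a p == b)].

Lemma walk_ex (a b : T) : connect e a b -> exists n, walkb n a b.
Proof.
move=> /connectP [p pp lp]; exists (size p); apply/existsP.
exists (in_tuple p); by rewrite /= pp -lp eqxx.
Qed.

(* Shortest-path distance; None encodes +infinity (b unreachable from a). *)
Definition dist (a b : T) : option nat :=
  match boolP (connect e a b) with
  | AltTrue h => Some (ex_minn (walk_ex h))
  | AltFalse _ => None
  end.

Variables (R : {set T}) (v0 : T) (p : seq T).
Definition Pv : seq T := v0 :: p.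
Definition xend : T := last v0 p.

Definition seglen (a b : T) : nat :=
  maxn (index a Pv) (index b Pv) - minn (index a Pv) (index b Pv).

Definition succP (v : T) : T := nth v Pv (index v Pv).+1.

Definition prof (z s : T) : option int :=
  match dist z s, dist z xend with
  | Some a, Some b => Some (a%:Z - b%:Z)%R
  | _, _ => None
  end.

Definition milestone (v : T) : bool :=
  (v \in Pv) && ((v == xend) || [exists s in R, prof v s != prof (succP v) s]).

Definition in_neutral_prefix (v u : T) : Prop :=
  [/\ milestone v, u \in Pv, index u Pv <= index v Pv &
      forall w, w \in Pv -> index u Pv <= index w Pv < index v Pv ->
        ~~ milestone w].

Definition shortest_path_to_set : Prop :=
  [/\ path e v0 p, uniq Pv, xend \in R &
      forall y d, y \in R -> dist v0 y = Some d -> size p <= d].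

End Graph.

(* Let P = w_0 ... w_n with x = w_n. Since P is a shortest path to R and
   x \in R, dist(w_k, x) = n - k: the suffix of P gives <=, and a shorter
   route from w_k to x would, after the prefix of P, reach R in fewer than n
   steps. If w_k is not a milestone, its profile agrees with that of w_(k+1);
   evaluating at y \in R and using dist(w_k, x) = dist(w_(k+1), x) + 1 gives
   dist(w_k, y) = dist(w_(k+1), y) + 1. Between u and the milestone v no
   milestone occurs, so these unit steps add up to |P[u,v]|. *)
From Pilot Require Import Defs.
From mathcomp Require Import all_boot all_order all_algebra.
From mathcomp Require Import zify.

Set Implicit Arguments. Unset Strict Implicit. Unset Printing Implicit Defensive.

Lemma last_take (T : Type) (x : T) (s : seq T) i :
  i <= size s -> last x (take i s) = nth x (x :: s) i.
Proof.
elim: s x i => [|y s IHs] x [|i] //= lt_i_s.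
by rewrite IHs // (set_nth_default y) //= ltnS.
Qed.

Section Walks.
Variables (T : finType) (e : rel T).

Lemma walkbP n a b :
  walkb e n a b <-> exists q, [/\ size q = n, path e a q & last a q = b].
Proof.
split=> [/existsP [q /andP [eq_p /eqP lq]]|[q [sq eq_p lq]]].
  by exists q; rewrite size_tuple.
by apply/existsP; exists (Tuple (introT eqP sq)); rewrite /= eq_p lq eqxx.
Qed.

Lemma walkb_connect n a b : walkb e n a b -> connect e a b.
Proof. by case/walkbP=> q [_ eq_p lq]; apply/connectP; exists q. Qed.

Lemma walkb_cat m n a b c :
  walkb e m a b -> walkb e n b c -> walkb e (m + n) a c.
Proof.
case/walkbP=> q [<- eq_p lq] /walkbP [r [<- er_p lr]]; apply/walkbP.
by exists (q ++ r); rewrite size_cat cat_path last_cat lq eq_p er_p.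
Qed.

Lemma distP a b d :
  dist e a b = Some d <-> walkb e d a b /\ forall n, walkb e n a b -> d <= n.
Proof.
rewrite /dist; case: {-}_ / boolP => [ab|nab].
  case: ex_minnP => m wm min_m; split=> [[<-] //|[wd min_d]].
  by congr Some; apply/anti_leq; rewrite min_m // min_d.
by split=> // -[/walkb_connect ab _]; rewrite ab in nab.
Qed.

Lemma dist_le_walkb n a b :
  walkb e n a b -> exists2 d, dist e a b = Some d & d <= n.
Proof.
move=> wn; rewrite /dist; case: {-}_ / boolP => [ab|/negP[]].
  by case: ex_minnP => m _ min_m; exists m; rewrite ?min_m.
exact: walkb_connect wn.
Qed.

Variables (v0 : T) (p : seq T).
Hypothesis p_path : path e v0 p.

Lemma walkb_prefix i : i <= size p -> walkb e i v0 (nth v0 (Pv v0 p) i).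
Proof.
move=> le_i_p; apply/walkbP; exists (take i p).
by rewrite size_takel ?take_path ?last_take.
Qed.

Lemma walkb_suffix i :
  i <= size p -> walkb e (size p - i) (nth v0 (Pv v0 p) i) (xend v0 p).
Proof.
move=> le_i_p; apply/walkbP; exists (drop i p); rewrite size_drop.
have := p_path; rewrite /xend -[in path _ _ p](cat_take_drop i p) cat_path.
rewrite -[in last _ p](cat_take_drop i p) last_cat last_take //.
by case/andP.
Qed.

End Walks.

Section ShortestPath.
Variables (T : finType) (e : rel T) (R : {set T}) (v0 : T) (p : seq T).
Hypothesis P_shortest : shortest_path_to_set e R v0 p.

Local Notation w i := (nth v0 (Pv v0 p) i).
Local Notation milestone := (milestone e R v0 p).

Lemma index_nth_Pv i : i <= size p -> index (w i) (Pv v0 p) = i.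
Proof. by case: P_shortest => _ uP _ _ le_i_p; rewrite index_uniq. Qed.

Lemma dist_nth_xend i :
  i <= size p -> dist e (w i) (xend v0 p) = Some (size p - i).
Proof.
case: P_shortest => p_path _ xR minP le_i_p; apply/distP.
split=> [|n wn]; first exact: walkb_suffix.
have [d dist_d le_d] := dist_le_walkb (walkb_cat (walkb_prefix p_path le_i_p) wn).
by have := minP _ _ xR dist_d; lia.
Qed.

Lemma succP_nth k : k < size p -> succP v0 p (w k) = w k.+1.
Proof.
move=> lt_k_p; rewrite /succP index_nth_Pv 1?ltnW //.
by rewrite (set_nth_default v0) //= ltnS.
Qed.

Lemma dist_prof_step z z' s n :
  dist e z (xend v0 p) = Some n.+1 -> dist e z' (xend v0 p) = Some n ->
  prof e v0 p z s = prof e v0 p z' s -> dist e z s = omap S (dist e z' s).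
Proof.
rewrite /prof => -> ->.
case: (dist e z s) => [a|]; case: (dist e z' s) => [b|] //= -[?].
by congr Some; lia.
Qed.

Lemma dist_non_milestone k y : k < size p -> y \in R -> ~~ milestone (w k) ->
  dist e (w k) y = omap S (dist e (w k.+1) y).
Proof.
move=> lt_k_p yR not_ms.
have same_prof : prof e v0 p (w k) y = prof e v0 p (w k.+1) y.
  move: not_ms; rewrite /Defs.milestone mem_nth /= ?ltnS 1?ltnW // negb_or.
  by case/andP=> _ /existsPn /(_ y); rewrite yR negbK succP_nth // => /eqP.
apply: dist_prof_step same_prof; last exact: dist_nth_xend.
by rewrite dist_nth_xend 1?ltnW //; congr Some; lia.
Qed.

Lemma dist_milestone_free_segment i j y : i <= j -> j <= size p -> y \in R ->
  (forall k, i <= k < j -> ~~ milestone (w k)) ->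
  dist e (w i) y = omap (addn (j - i)) (dist e (w j) y).
Proof.
move=> /subnKC <-; rewrite addKn; move: (j - i) => n + yR.
elim: n i => [|n IHn] i le_p no_ms; first by rewrite addn0; case: (dist e _ y).
rewrite dist_non_milestone //; first last.
- by apply: no_ms; lia.
- by lia.
rewrite addnS -addSn IHn.
- by case: (dist e _ y) => //= d; rewrite addSn.
- by lia.
- by move=> k /andP[lt_ik lt_kn]; apply: no_ms; lia.
Qed.

End ShortestPath.

Theorem lemma3p1 (T : finType) (e : rel T) (e_sym : symmetric e)
    (R : {set T}) (v0 : T) (p : seq T) :
  shortest_path_to_set e R v0 p ->
  forall v u y, milestone e R v0 p v -> in_neutral_prefix e R v0 p v u ->
  y \in R ->
  dist e u y = omap (fun d => seglen v0 p u v + d) (dist e v y).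
Proof.
move=> P_shortest v u y _ [/andP[vP _] uP le_uv no_ms] yR.
have le_v_p : index v (Pv v0 p) <= size p by rewrite -ltnS index_mem.
rewrite -{1}(nth_index v0 uP) -{2}(nth_index v0 vP).
rewrite (dist_milestone_free_segment P_shortest le_uv le_v_p yR).
  by rewrite /seglen (maxn_idPr le_uv) (minn_idPl le_uv); case: (dist e _ y).
move=> k /andP[le_uk lt_kv]; have le_k_p : k <= size p by lia.
apply: no_ms; first by rewrite mem_nth.
by rewrite (index_nth_Pv P_shortest le_k_p) le_uk.
Qed.
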